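(* Fix one of the two variants $\sharp\in\{\text{lumped},\text{exact}\}$ described in the context. Let $\vec X^m\in\underline V^h_{\partial_0}$ satisfy assumption $(\mathfrak A)$, let $\Delta t_m>0$, and let $(\delta\vec X^{m+1},\kappa^{m+1})\in\underline V^h_\partial\times W_\sharp$ satisfy, with $\vec X^{m+1}=\vec X^m+\delta\vec X^{m+1}$, $$\Big(\vec X^m\cdot\vec e_1\,\tfrac{\vec X^{m+1}-\vec X^m}{\Delta t_m},\chi\,\vec\nu^m|\vec X^m_\rho|\Big)_\sharp=\Big(\vec X^m\cdot\vec e_1\,\kappa^{m+1},\chi|\vec X^m_\rho|\Big)_\sharp-\frac{(\vec X^m\cdot\vec e_1,\kappa^{m+1}|\vec X^m_\rho|)_\sharp}{(\vec X^m\cdot\vec e_1,|\vec X^m_\rho|)}\,\big(\vec X^m\cdot\vec e_1,\chi|\vec X^m_\rho|\big)_\sharp\quad\forall\chi\in W_\sharp,$$ $$\Big(\vec X^m\cdot\vec e_1\,\kappa^{m+1}\vec\nu^m,\vec\eta\,|\vec X^m_\rho|\Big)_\sharp+\big(\vec\eta\cdot\vec e_1,|\vec X^{m+1}_\rho|\big)+\Big((\vec X^m\cdot\vec e_1)\vec X^{m+1}_\rho,\vec\eta_\rho|\vec X^m_\rho|^{-1}\Big)=B^m(\vec\eta)\quad\forall\vec\eta\in\underline V^h_\partial.$$ Then $$\tfrac1{2\pi}\big(E(\vec X^m)-E(\vec X^{m+1})\big)\ge\Delta t_m\Big[\big(\vec X^m\cdot\vec e_1\,|\kappa^{m+1}|^2,|\vec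 X^m_\rho|\big)_\sharp-\frac{\big|(\vec X^m\cdot\vec e_1,\kappa^{m+1}|\vec X^m_\rho|)_\sharp\big|^2}{(\vec X^m\cdot\vec e_1,|\vec X^m_\rho|)}\Big]\ge0 .$$
   Context: Setup. $\vec e_1=(1,0)^T$, $\vec e_2=(0,1)^T$; ''$\cdot$'' is the Euclidean inner product; $[r]_+=\max\{r,0\}$, $[r]_-=-\max\{-r,0\}$. $I$ is either the periodic interval $\mathbb R/\mathbb Z$ (with $\partial I=\emptyset$) or $I=(0,1)$ (with $\partial I=\{0,1\}$). $\partial I=\partial_DI\cup\partial_0I\cup\partial_1I\cup\partial_2I$ is a given disjoint partition, and $\widehat\varrho^{(p)}\in\mathbb R$, $p\in\{0,1\}$, are given constants with $|\widehat\varrho^{(p)}|\le1$. Let $J\ge3$, $h=1/J$, $q_j=jh$ ($j=0,\dots,J$; $q_0=q_J$ identified in the periodic case). $V^h$ is the space of continuous functions on $\overline I$ (periodic if $I=\mathbb R/\mathbb Z$) that are affine on each $[q_{j-1},q_j]$; $\underline V^h=[V^h]^2$; $\underline V^h_{\partial_0}=\{\vec\eta\in\underline V^h:\vec\eta(\rho)\cdot\vec e_1=0\ \forall\rho\in\partial_0I\}$; $\underline V^h_\partial=\{\vec\eta\in\underline V^h_{\partial_0}:\vec\eta(\rho)\cdot\vec e_i=0\ \forall\rho\in\partial_iI,\ i=1,2;\ \vec\eta(\rho)=\vec0\ \forall\rho\in\partial_DI\}$; $W^h_{\partial_0}=\{\chi\in V^h:\chi(\rho)=0\ \forall\rho\in\partial_0I\}$.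 $(\cdot,\cdot)$ is the $L^2(I)$ inner product, and for piecewise continuous $f,g$ the mass-lumped product is $(f,g)^h=\tfrac h2\sum_{j=1}^J[(fg)(q_j^-)+(fg)(q_{j-1}^+)]$. Two variants: ''lumped'': $(\cdot,\cdot)_\sharp=(\cdot,\cdot)^h$, $W_\sharp=W^h_{\partial_0}$; ''exact'': $(\cdot,\cdot)_\sharp=(\cdot,\cdot)$, $W_\sharp=V^h$. $\vec\nu^m=-[\vec X^m_\rho]^\perp/|\vec X^m_\rho|$ with $(a,b)^\perp=(b,-a)$. Assumption $(\mathfrak A)$: $|\vec X^m_\rho|>0$ a.e. on $I$ and $\vec X^m(\rho)\cdot\vec e_1>0$ for all $\rho\in\overline I\setminus\partial_0I$. $B^m(\vec\eta)=-\sum_{p\in\partial_1I}\widehat\varrho^{(p)}(\vec X^m(p)\cdot\vec e_1)\vec\eta(p)\cdot\vec e_2-\sum_{p\in\partial_2I}\big(([\widehat\varrho^{(p)}]_+\vec X^{m+1}(p)+[\widehat\varrho^{(p)}]_-\vec X^m(p))\cdot\vec e_1\big)\vec\eta(p)\cdot\vec e_1$. The discrete energy of $\vec X\in\underline V^h$ is $E(\vec X)=2\pi(\vec X\cdot\vec e_1,|\vec X_\rho|)+2\pi\sum_{p\in\partial_1I}\widehat\varrho^{(p)}(\vec X(p)\cdot\vec e_1)(\vec X(p)\cdot\vec e_2)+\pi\sum_{p\in\partial_2I}\widehat\varrho^{(p)}(\vec X(p)\cdot\vec e_1)^2$. *)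

From Stdlib Require Import Reals ClassicalEpsilon.
Open Scope R_scope.

Definition vec := (R * R)%type.
Definition dot (u v : vec) : R := fst u * fst v + snd u * snd v.
Definition vadd (u v : vec) : vec := (fst u + fst v, snd u + snd v).
Definition vsub (u v : vec) : vec := (fst u - fst v, snd u - snd v).
Definition vscal (a : R) (u : vec) : vec := (a * fst u, a * snd u).
Definition vnorm (u : vec) : R := sqrt (fst u ^ 2 + snd u ^ 2).
Definition perp (u : vec) : vec := (snd u, - fst u).

Definition posp (r : R) : R := Rmax r 0.
Definition negp (r : R) : R := - Rmax (- r) 0.

Fixpoint sumR (n : nat) (g : nat -> R) : R :=
  match n with O => 0 | S k => sumR k g + g (S k) end.

(* ---------- Riemann integral (value; 0 if not integrable) ---------- *)
Definition Rint (f : R -> R) (a b : R) : R :=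
  epsilon (inhabits 0) (fun r => exists pr : Riemann_integrable f a b, RiemannInt pr = r).

Definition q (J i : nat) : R := INR i / INR J.
Definition hh (J : nat) : R := / INR J.

(* A function of V^h is represented by its nodal values f 0, ..., f J
   (in the periodic case f J = f 0).  On element j = [q_{j-1}, q_j]
   (1 <= j <= J) it is the affine interpolant. *)
Definition elem (J : nat) (f : nat -> R) (j : nat) (x : R) : R :=
  f (j - 1)%nat + (f j - f (j - 1)%nat) * (x - q J (j - 1)) * INR J.
Definition delem (J : nat) (f : nat -> R) (j : nat) : R :=
  (f j - f (j - 1)%nat) * INR J.

Definition elem2 (J : nat) (X : nat -> vec) (j : nat) (x : R) : vec :=
  (elem J (fun i => fst (X i)) j x, elem J (fun i => snd (X i)) j x).
Definition dX (J : nat) (X : nat -> vec) (j : nat) : vec :=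
  (delem J (fun i => fst (X i)) j, delem J (fun i => snd (X i)) j).

Definition nu (J : nat) (X : nat -> vec) (j : nat) : vec :=
  vscal (- / vnorm (dX J X j)) (perp (dX J X j)).

(* ---------- inner products of piecewise continuous functions ----------
   A piecewise continuous function is given elementwise: F j is its
   (continuous extension) on the closed element [q_{j-1}, q_j].  The
   arguments below are the pointwise products (f g) resp. (u . v). *)
Definition ipE (J : nat) (F : nat -> R -> R) : R :=
  sumR J (fun j => Rint (F j) (q J (j - 1)) (q J j)).
(* mass lumping: h/2 sum_j [ (fg)(q_j^-) + (fg)(q_{j-1}^+) ] *)
Definition ipL (J : nat) (F : nat -> R -> R) : R :=
  hh J / 2 * sumR J (fun j => F j (q J j) + F j (q J (j - 1))).

Inductive variant := Lumped | Exact.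
Definition ipS (v : variant) (J : nat) (F : nat -> R -> R) : R :=
  match v with Lumped => ipL J F | Exact => ipE J F end.

(* ---------- domain and boundary ----------
   per = true : I = R/Z (no boundary); per = false : I = (0,1), boundary {0,1}.
   Boundary point p : bool  (false = 0, true = 1); bc p is the part of the
   partition dI = d_D I u d_0 I u d_1 I u d_2 I that contains p. *)
Inductive bclabel := BD | B0 | B1 | B2.
Definition bclabel_eqb (a b : bclabel) : bool :=
  match a, b with
  | BD, BD | B0, B0 | B1, B1 | B2, B2 => true
  | _, _ => false
  end.

Definition bpt (p : bool) : R := if p then 1 else 0.
Definition bnode (J : nat) (p : bool) : nat := if p then J else 0%nat.

Definition inB (per : bool) (bc : bool -> bclabel) (k : bclabel) (p : bool) : Prop :=
  per = false /\ bc p = k.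
Definition inBpt (per : bool) (bc : bool -> bclabel) (k : bclabel) (x : R) : Prop :=
  exists p, inB per bc k p /\ x = bpt p.

Definition bsum (per : bool) (bc : bool -> bclabel) (k : bclabel) (g : bool -> R) : R :=
  if per then 0 else
    (if bclabel_eqb (bc false) k then g false else 0)
    + (if bclabel_eqb (bc true) k then g true else 0).

Definition inVh (per : bool) (J : nat) (f : nat -> R) : Prop :=
  per = true -> f J = f 0%nat.
Definition inVh2 (per : bool) (J : nat) (X : nat -> vec) : Prop :=
  per = true -> X J = X 0%nat.
Definition inV0 (per : bool) (bc : bool -> bclabel) (J : nat) (X : nat -> vec) : Prop :=
  inVh2 per J X /\ (forall p, inB per bc B0 p -> fst (X (bnode J p)) = 0).
Definition inVd (per : bool) (bc : bool -> bclabel) (J : nat) (X : nat -> vec) : Prop :=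
  inV0 per bc J X
  /\ (forall p, inB per bc B1 p -> fst (X (bnode J p)) = 0)
  /\ (forall p, inB per bc B2 p -> snd (X (bnode J p)) = 0)
  /\ (forall p, inB per bc BD p -> X (bnode J p) = (0, 0)).
Definition inW0 (per : bool) (bc : bool -> bclabel) (J : nat) (f : nat -> R) : Prop :=
  inVh per J f /\ (forall p, inB per bc B0 p -> f (bnode J p) = 0).
Definition inWS (v : variant) (per : bool) (bc : bool -> bclabel) (J : nat) (f : nat -> R) : Prop :=
  match v with Lumped => inW0 per bc J f | Exact => inVh per J f end.

Definition assumptionA (per : bool) (bc : bool -> bclabel) (J : nat) (X : nat -> vec) : Prop :=
  (forall j : nat, (1 <= j <= J)%nat -> vnorm (dX J X j) > 0)
  /\ (forall (j : nat) (x : R), (1 <= j <= J)%nat -> q J (j - 1) <= x <= q J j ->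
        ~ inBpt per bc B0 x -> fst (elem2 J X j x) > 0).

Definition energy (per : bool) (bc : bool -> bclabel) (rh : bool -> R) (J : nat)
    (X : nat -> vec) : R :=
  2 * PI * ipE J (fun j x => fst (elem2 J X j x) * vnorm (dX J X j))
  + 2 * PI * bsum per bc B1 (fun p => rh p * fst (X (bnode J p)) * snd (X (bnode J p)))
  + PI * bsum per bc B2 (fun p => rh p * fst (X (bnode J p)) ^ 2).

Definition Bm (per : bool) (bc : bool -> bclabel) (rh : bool -> R) (J : nat)
    (Xm Xm1 eta : nat -> vec) : R :=
  - bsum per bc B1 (fun p => rh p * fst (Xm (bnode J p)) * snd (eta (bnode J p)))
  - bsum per bc B2 (fun p =>
      (posp (rh p) * fst (Xm1 (bnode J p)) + negp (rh p) * fst (Xm (bnode J p)))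
      * fst (eta (bnode J p))).

From Pilot Require Import Defs.
From Stdlib Require Import Reals Lra Lia Psatz ClassicalEpsilon FunctionalExtensionality Classical.
From Coquelicot Require Import Coquelicot.
Open Scope R_scope.

(* Testing the first equation with chi = kappa^{m+1} and the second with eta = delta X^{m+1} gives
     dt [A - K^2/D] = B^m(delta X) - (x1(delta X), |X^{m+1}_rho|)
                      - (x1(X^m) X^{m+1}_rho, delta X_rho / |X^m_rho|).
   Since x1(X^m) >= 0, the pointwise inequality a.(a - b)/|b| >= |a| - |b| for a = X^{m+1}_rho and
   b = X^m_rho bounds the two subtracted terms by the decrease of the bulk energy (x1, |X_rho|),
   and splitting rho into [rho]_+ (implicit) and [rho]_- (explicit) in B^m bounds the boundary term
   by the decrease of the boundary energy.  Finally A - K^2/D >= 0 is Cauchy-Schwarz for the weight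
   x1(X^m) |X^m_rho|; its lumped integral equals the exact one D because the weight is affine on
   each element. *)

Definition smooth_pieces (F : nat -> R -> R) : Prop := forall j x, ex_derive (F j) x.

Ltac solve_smooth_pieces :=
  intros ? ?; cbv [dot vscal vsub vadd elem2 elem fst snd]; auto_derive; auto.

Lemma smooth_pieces_mult (F G : nat -> R -> R) :
  smooth_pieces F -> smooth_pieces G -> smooth_pieces (fun j x => F j x * G j x).
Proof. intros HF HG j x; apply ex_derive_mult; auto. Qed.

Lemma Riemann_integrable_derivable (f : R -> R) a b :
  (forall x, ex_derive f x) -> Riemann_integrable f a b.
Proof.
  intros Hf.
  assert (Hc : forall x, continuity_pt f x).
  { intro x; apply continuity_pt_filterlim, (ex_derive_continuous f x (Hf x)). }
  destruct (Rle_dec a b).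
  - apply continuity_implies_RiemannInt; auto.
  - apply RiemannInt_P1, continuity_implies_RiemannInt; auto; lra.
Qed.

Lemma Rint_RiemannInt f a b (pr : Riemann_integrable f a b) : Rint f a b = RiemannInt pr.
Proof.
  unfold Rint.
  destruct (epsilon_spec (inhabits 0) (fun r => exists pr, RiemannInt pr = r)
              (ex_intro _ _ (ex_intro _ pr eq_refl))) as [pr' <-].
  apply RiemannInt_P5.
Qed.

Lemma Rint_lin (f g : R -> R) a b l :
  (forall x, ex_derive f x) -> (forall x, ex_derive g x) ->
  Rint (fun x => f x + l * g x) a b = Rint f a b + l * Rint g a b.
Proof.
  intros Hf Hg.
  pose proof (Riemann_integrable_derivable f a b Hf) as pf.
  pose proof (Riemann_integrable_derivable g a b Hg) as pg.
  rewrite (Rint_RiemannInt _ _ _ (RiemannInt_P10 l pf pg)).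
  rewrite (Rint_RiemannInt _ _ _ pf), (Rint_RiemannInt _ _ _ pg).
  apply RiemannInt_P13.
Qed.

Lemma Rint_ge0 (f : R -> R) a b :
  (forall x, ex_derive f x) -> a <= b -> (forall x, a <= x <= b -> 0 <= f x) ->
  0 <= Rint f a b.
Proof.
  intros Hf hab Hpos.
  pose proof (Riemann_integrable_derivable f a b Hf) as pf.
  rewrite (Rint_RiemannInt _ _ _ pf).
  rewrite <- (Rmult_0_l (b - a)), <- (RiemannInt_P15 (RiemannInt_P14 a b 0)).
  apply RiemannInt_P19; auto.
  intros x Hx; apply Hpos; lra.
Qed.

Lemma RInt_affine (al be a b : R) :
  RInt (fun x => al + be * x) a b = (b - a) / 2 * ((al + be * b) + (al + be * a)).
Proof.
  apply is_RInt_unique.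
  set (G := fun x => al * x + be * x ^ 2 / 2).
  replace ((b - a) / 2 * ((al + be * b) + (al + be * a))) with (minus (G b) (G a))
    by (unfold minus, plus, opp, G; simpl; field).
  apply (is_RInt_derive (V := R_CompleteNormedModule) G).
  - intros x _; unfold G; auto_derive; auto; field.
  - intros x _; apply (ex_derive_continuous (fun x => al + be * x)); auto_derive; auto.
Qed.

Lemma sumR_lin n (f g : nat -> R) l :
  sumR n (fun j => f j + l * g j) = sumR n f + l * sumR n g.
Proof. induction n as [|n IH]; simpl; [ring | rewrite IH; ring]. Qed.

Lemma sumR_scal n (f : nat -> R) l : sumR n (fun j => l * f j) = l * sumR n f.
Proof. induction n as [|n IH]; simpl; [ring | rewrite IH; ring]. Qed.

Lemma sumR_ext n (f g : nat -> R) :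
  (forall j, (1 <= j <= n)%nat -> f j = g j) -> sumR n f = sumR n g.
Proof.
  induction n as [|n IH]; simpl; intros H; auto.
  rewrite IH, (H (S n)); auto; [lia | intros; apply H; lia].
Qed.

Lemma sumR_ge0 n (f : nat -> R) :
  (forall j, (1 <= j <= n)%nat -> 0 <= f j) -> 0 <= sumR n f.
Proof.
  induction n as [|n IH]; simpl; intros H; [lra|].
  assert (0 <= sumR n f) by (apply IH; intros; apply H; lia).
  assert (0 <= f (S n)) by (apply H; lia).
  lra.
Qed.

Section Mesh.

Variable J : nat.
Hypothesis J_pos : (0 < J)%nat.

Lemma INR_J_pos : 0 < INR J.
Proof. apply lt_0_INR; lia. Qed.

Lemma q_step j : (1 <= j)%nat -> q J j - q J (j - 1) = / INR J.
Proof.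
  intros Hj. pose proof INR_J_pos. unfold q.
  destruct j as [|j]; [lia|]. replace (S j - 1)%nat with j by lia.
  rewrite S_INR. field. lra.
Qed.

Lemma q_pred_le j : (1 <= j)%nat -> q J (j - 1) <= q J j.
Proof.
  intros Hj. pose proof (q_step j Hj). pose proof INR_J_pos.
  assert (0 < / INR J) by (apply Rinv_0_lt_compat; lra). lra.
Qed.

Lemma INR_eq_q_mult k : INR k = q J k * INR J.
Proof. pose proof INR_J_pos. unfold q. field. lra. Qed.

Lemma q_eq0 k : q J k = 0 -> k = 0%nat.
Proof. intros H. apply INR_eq. rewrite INR_eq_q_mult, H. simpl. ring. Qed.

Lemma q_eq1 k : q J k = 1 -> k = J.
Proof. intros H. apply INR_eq. rewrite INR_eq_q_mult, H. ring. Qed.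

Lemma elem_left f j : elem J f j (q J (j - 1)) = f (j - 1)%nat.
Proof. unfold elem. ring. Qed.

Lemma elem_right f j : (1 <= j)%nat -> elem J f j (q J j) = f j.
Proof.
  intros Hj. pose proof INR_J_pos. unfold elem.
  rewrite (q_step j Hj). field. lra.
Qed.

Lemma elem_ge0 f j x : (1 <= j)%nat -> q J (j - 1) <= x <= q J j ->
  0 <= f (j - 1)%nat -> 0 <= f j -> 0 <= elem J f j x.
Proof.
  intros Hj Hx H0 H1. pose proof INR_J_pos. pose proof (q_step j Hj).
  set (s := (x - q J (j - 1)) * INR J).
  assert (0 <= s <= 1).
  { unfold s. split.
    - apply Rmult_le_pos; lra.
    - replace 1 with ((q J j - q J (j - 1)) * INR J) by (rewrite (q_step j Hj); field; lra).
      apply Rmult_le_compat_r; lra. }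
  replace (elem J f j x) with (f (j - 1)%nat * (1 - s) + f j * s) by (unfold elem, s; ring).
  nra.
Qed.

Lemma ipL_elem_eq_ipE (f c : nat -> R) :
  ipL J (fun j x => elem J f j x * c j) = ipE J (fun j x => elem J f j x * c j).
Proof.
  pose proof INR_J_pos.
  unfold ipL, ipE. rewrite <- sumR_scal. apply sumR_ext. intros j Hj.
  set (be := (f j - f (j - 1)%nat) * INR J * c j).
  set (al := f (j - 1)%nat * c j - be * q J (j - 1)).
  assert (Haff : forall x, elem J f j x * c j = al + be * x)
    by (intro x; unfold al, be, elem; ring).
  assert (Hint : Riemann_integrable (fun x => elem J f j x * c j) (q J (j - 1)) (q J j)).
  { apply Riemann_integrable_derivable. intro x. unfold elem. auto_derive. auto. }
  rewrite (Rint_RiemannInt _ _ _ Hint), <- RInt_Reals, (RInt_ext _ _ _ _ (fun x _ => Haff x)).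
  rewrite RInt_affine, !Haff, (q_step j ltac:(lia)). unfold hh. field. lra.
Qed.

End Mesh.

Lemma ipS_ext v J (F G : nat -> R -> R) :
  (forall j x, F j x = G j x) -> ipS v J F = ipS v J G.
Proof.
  intros H. replace F with G; auto.
  apply functional_extensionality; intro j; apply functional_extensionality; auto.
Qed.

Lemma ipS_lin v J (F G H : nat -> R -> R) l : smooth_pieces F -> smooth_pieces G ->
  (forall j x, H j x = F j x + l * G j x) -> ipS v J H = ipS v J F + l * ipS v J G.
Proof.
  intros HF HG HH. rewrite (ipS_ext v J H _ HH).
  destruct v; simpl.
  - unfold ipL. rewrite <- Rmult_assoc, (Rmult_comm l), Rmult_assoc, <- Rmult_plus_distr_l.
    f_equal. rewrite <- sumR_lin. apply sumR_ext. intros. ring.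
  - unfold ipE. rewrite <- sumR_lin. apply sumR_ext. intros. apply Rint_lin; auto.
Qed.

Lemma ipS_scal v J (G H : nat -> R -> R) l : smooth_pieces G ->
  (forall j x, H j x = l * G j x) -> ipS v J H = l * ipS v J G.
Proof.
  intros HG HH.
  rewrite (ipS_lin v J G G H (l - 1) HG HG) by (intros; rewrite HH; ring).
  ring.
Qed.

Lemma ipS_lin3 v J (F1 F2 F3 H : nat -> R -> R) a b :
  smooth_pieces F1 -> smooth_pieces F2 -> smooth_pieces F3 ->
  (forall j x, H j x = F1 j x + a * F2 j x + b * F3 j x) ->
  ipS v J H = ipS v J F1 + a * ipS v J F2 + b * ipS v J F3.
Proof.
  intros C1 C2 C3 HH.
  assert (C12 : smooth_pieces (fun j x => F1 j x + a * F2 j x)).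
  { intros j x. apply (ex_derive_plus (F1 j) (fun x => a * F2 j x)); auto.
    apply ex_derive_scal; auto. }
  rewrite (ipS_lin v J _ F3 H b C12 C3) by (intros; rewrite HH; ring).
  rewrite (ipS_lin v J F1 F2 _ a C1 C2) by (intros; ring).
  ring.
Qed.

Lemma ipS_ge0 v J (H : nat -> R -> R) : (0 < J)%nat -> smooth_pieces H ->
  (forall j, (1 <= j <= J)%nat -> forall x, q J (j - 1) <= x <= q J j -> 0 <= H j x) ->
  0 <= ipS v J H.
Proof.
  intros HJ HC HH. destruct v; simpl.
  - unfold ipL, hh. pose proof (INR_J_pos J HJ).
    apply Rmult_le_pos.
    + apply Rmult_le_pos; [apply Rlt_le, Rinv_0_lt_compat|]; lra.
    + apply sumR_ge0. intros j Hj. pose proof (q_pred_le J HJ j ltac:(lia)).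
      apply Rplus_le_le_0_compat; apply HH; auto; lra.
  - unfold ipE. apply sumR_ge0. intros j Hj.
    apply Rint_ge0; auto. apply q_pred_le; lia.
Qed.

Lemma quadratic_ge0_discriminant a k d : 0 <= d ->
  (forall t, 0 <= a - 2 * t * k + t ^ 2 * d) -> k / d * k <= a.
Proof.
  intros [Hd | <-] Hq.
  - pose proof (Hq (k / d)). replace (a - 2 * (k / d) * k + (k / d) ^ 2 * d)
      with (a - k / d * k) in H by (field; lra). lra.
  - pose proof (Hq 0). rewrite Rdiv_0_r. lra.
Qed.

Lemma ipS_weighted_variance_ge0 v J (w f : nat -> R -> R) :
  (0 < J)%nat -> smooth_pieces w -> smooth_pieces f ->
  (forall j, (1 <= j <= J)%nat -> forall x, q J (j - 1) <= x <= q J j -> 0 <= w j x) ->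
  ipS v J (fun j x => w j x * f j x) / ipS v J w * ipS v J (fun j x => w j x * f j x)
  <= ipS v J (fun j x => w j x * f j x ^ 2).
Proof.
  intros HJ Hw Hf Hpos.
  assert (Hwf : smooth_pieces (fun j x => w j x * f j x)) by (apply smooth_pieces_mult; auto).
  assert (Hwff : smooth_pieces (fun j x => w j x * f j x ^ 2)).
  { intros j x. apply ex_derive_mult, ex_derive_pow; auto. }
  apply quadratic_ge0_discriminant; [apply ipS_ge0; auto|].
  intro t.
  replace (_ - 2 * t * _ + t ^ 2 * _)
    with (ipS v J (fun j x => w j x * f j x ^ 2) + - 2 * t * ipS v J (fun j x => w j x * f j x)
          + t ^ 2 * ipS v J w) by ring.
  rewrite <- (ipS_lin3 v J _ _ _ (fun j x => w j x * (f j x - t) ^ 2) (- 2 * t) (t ^ 2) Hwff Hwf Hw)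
    by (intros; ring).
  apply ipS_ge0; auto.
  - intros j x. apply ex_derive_mult, ex_derive_pow; auto.
    apply (ex_derive_minus (f j) (fun _ => t)); auto. apply ex_derive_const.
  - intros j Hj x Hx. apply Rmult_le_pos; [apply Hpos; auto | apply pow2_ge_0].
Qed.

Lemma vnorm_ge0 u : 0 <= vnorm u.
Proof. apply sqrt_pos. Qed.

Lemma vnorm_sqr u : vnorm u * vnorm u = dot u u.
Proof.
  destruct u as [u1 u2]. unfold vnorm, dot; simpl.
  rewrite sqrt_sqrt; [ring | nra].
Qed.

Lemma dot_le_vnorm u w : dot u w <= vnorm u * vnorm w.
Proof.
  pose proof (vnorm_ge0 u). pose proof (vnorm_ge0 w).
  destruct (Rle_dec (dot u w) 0) as [Hle | Hgt]; [nra|].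
  destruct u as [u1 u2], w as [w1 w2]. unfold vnorm, dot in *; simpl in *.
  rewrite <- sqrt_mult_alt by nra.
  rewrite <- (sqrt_Rsqr (u1 * w1 + u2 * w2)) by lra.
  apply sqrt_le_1_alt. unfold Rsqr.
  pose proof (pow2_ge_0 (u1 * w2 - u2 * w1)). nra.
Qed.

Lemma vnorm_diff_le_dot b d : 0 < vnorm b ->
  vnorm (vadd b d) - vnorm b <= dot (vadd b d) d / vnorm b.
Proof.
  intros Hb. set (a := vadd b d).
  assert (Ead : dot a d = dot a a - dot a b) by (unfold a, dot, vadd; simpl; ring).
  pose proof (dot_le_vnorm a b). pose proof (vnorm_sqr a). pose proof (vnorm_ge0 a).
  apply (Rmult_le_reg_r (vnorm b)); auto.
  unfold Rdiv. rewrite Rmult_assoc, Rinv_l, Rmult_1_r by lra.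
  pose proof (pow2_ge_0 (vnorm a - vnorm b)). nra.
Qed.

Lemma dX_vadd J (X V : nat -> vec) j :
  dX J (fun i => vadd (X i) (V i)) j = vadd (dX J X j) (dX J V j).
Proof. unfold dX, delem, vadd; simpl. f_equal; ring. Qed.

Lemma fst_node_ge0 per bc J X : (0 < J)%nat -> inV0 per bc J X -> assumptionA per bc J X ->
  forall i, (i <= J)%nat -> 0 <= fst (X i).
Proof.
  intros HJ [_ HV] [_ HA] i Hi.
  destruct (classic (inBpt per bc Defs.B0 (q J i))) as [[p [Hp Eq]] | Hb].
  - destruct p; simpl in Eq; [apply q_eq1 in Eq | apply q_eq0 in Eq]; auto; subst i;
      pose proof (HV _ Hp) as Z; simpl in Z; lra.
  - destruct i as [|i].
    + assert (H1 : q J (1 - 1) <= q J 0 <= q J 1)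
        by (pose proof (q_pred_le J HJ 1 (le_n 1)); simpl in *; lra).
      pose proof (HA 1%nat (q J 0) ltac:(lia) H1 Hb) as G.
      unfold elem2 in G; simpl fst in G. change (q J 0) with (q J (1 - 1)) in G.
      rewrite elem_left in G. simpl in G. lra.
    + pose proof (q_pred_le J HJ (S i) ltac:(lia)).
      pose proof (HA (S i) (q J (S i)) ltac:(lia) ltac:(lra) Hb) as G.
      unfold elem2 in G; simpl fst in G. rewrite (elem_right J HJ) in G by lia. lra.
Qed.

Lemma fst_elem2_ge0 per bc J X : (0 < J)%nat -> inV0 per bc J X -> assumptionA per bc J X ->
  forall j, (1 <= j <= J)%nat -> forall x, q J (j - 1) <= x <= q J j -> 0 <= fst (elem2 J X j x).
Proof.
  intros HJ HV HA j Hj x Hx. apply elem_ge0; auto; try lia;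
    apply (fst_node_ge0 per bc J X); auto; lia.
Qed.

Definition bulk_energy (J : nat) (X : nat -> vec) : R :=
  ipE J (fun j x => fst (elem2 J X j x) * vnorm (dX J X j)).

Definition boundary_energy (per : bool) (bc : bool -> bclabel) (rh : bool -> R) (J : nat)
    (X : nat -> vec) : R :=
  bsum per bc Defs.B1 (fun p => rh p * fst (X (bnode J p)) * snd (X (bnode J p)))
  + bsum per bc Defs.B2 (fun p => rh p * fst (X (bnode J p)) ^ 2) / 2.

Lemma energy_split per bc rh J X :
  energy per bc rh J X = 2 * PI * (bulk_energy J X + boundary_energy per bc rh J X).
Proof. unfold energy, bulk_energy, boundary_energy. field. Qed.

Lemma bulk_energy_step J (X V : nat -> vec) : (0 < J)%nat ->
  (forall j, (1 <= j <= J)%nat -> 0 < vnorm (dX J X j)) ->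
  (forall j, (1 <= j <= J)%nat -> forall x, q J (j - 1) <= x <= q J j ->
     0 <= fst (elem2 J X j x)) ->
  let Y := fun i => vadd (X i) (V i) in
  bulk_energy J Y - bulk_energy J X
  <= ipE J (fun j x => fst (elem2 J V j x) * vnorm (dX J Y j))
     + ipE J (fun j x => dot (vscal (fst (elem2 J X j x)) (dX J Y j))
                             (vscal (/ vnorm (dX J X j)) (dX J V j))).
Proof.
  intros HJ Hlen Hx1 Y.
  set (gap := fun j x => fst (elem2 J X j x)
              * (dot (dX J Y j) (dX J V j) / vnorm (dX J X j)
                 - vnorm (dX J Y j) + vnorm (dX J X j))).
  unfold bulk_energy. repeat change (ipE J ?F) with (ipS Exact J F).
  assert (Egap : ipS Exact J gap
    = ipS Exact J (fun j x => fst (elem2 J V j x) * vnorm (dX J Y j))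
      + 1 * ipS Exact J (fun j x => dot (vscal (fst (elem2 J X j x)) (dX J Y j))
                                       (vscal (/ vnorm (dX J X j)) (dX J V j)))
      + (-1) * ipS Exact J (fun j x => fst (elem2 J Y j x) * vnorm (dX J Y j))
      + 1 * ipS Exact J (fun j x => fst (elem2 J X j x) * vnorm (dX J X j))).
  { rewrite <- (ipS_lin3 Exact J _ _ _ (fun j x => fst (elem2 J V j x) * vnorm (dX J Y j)
      + 1 * dot (vscal (fst (elem2 J X j x)) (dX J Y j)) (vscal (/ vnorm (dX J X j)) (dX J V j))
      + (-1) * (fst (elem2 J Y j x) * vnorm (dX J Y j)))); try solve_smooth_pieces; [|reflexivity].
    apply (ipS_lin Exact J); try solve_smooth_pieces.
    intros j x. unfold gap, Y, Rdiv. cbv [dot vscal vadd elem2 elem fst snd]. ring. }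
  assert (Pgap : 0 <= ipS Exact J gap).
  { apply ipS_ge0; auto; [unfold gap; solve_smooth_pieces|].
    intros j Hj x Hx. apply Rmult_le_pos; [apply Hx1; auto|].
    unfold Y. rewrite dX_vadd.
    pose proof (vnorm_diff_le_dot (dX J X j) (dX J V j) (Hlen j Hj)). lra. }
  lra.
Qed.

Lemma posp_negp_step r x d :
  - ((posp r * (x + d) + negp r * x) * d) <= (r * x ^ 2 - r * (x + d) ^ 2) / 2.
Proof.
  unfold posp, negp. pose proof (pow2_ge_0 d).
  destruct (Rle_dec 0 r).
  - rewrite (Rmax_left r 0), (Rmax_right (- r) 0) by lra. nra.
  - rewrite (Rmax_right r 0), (Rmax_left (- r) 0) by lra. nra.
Qed.

Lemma boundary_energy_step per bc rh J (X V : nat -> vec) :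
  (forall p, inB per bc Defs.B1 p -> fst (V (bnode J p)) = 0) ->
  let Y := fun i => vadd (X i) (V i) in
  Bm per bc rh J X Y V <= boundary_energy per bc rh J X - boundary_energy per bc rh J Y.
Proof.
  intros HB1 Y. unfold Bm, boundary_energy, bsum, Y, vadd.
  destruct per; [lra|]. cbn [fst snd].
  assert (Hf : bc false = Defs.B1 -> fst (V (bnode J false)) = 0)
    by (intros; apply HB1; split; auto).
  assert (Ht : bc true = Defs.B1 -> fst (V (bnode J true)) = 0)
    by (intros; apply HB1; split; auto).
  pose proof (posp_negp_step (rh false) (fst (X (bnode J false))) (fst (V (bnode J false)))).
  pose proof (posp_negp_step (rh true) (fst (X (bnode J true))) (fst (V (bnode J true)))).
  destruct (bc false), (bc true); cbn [bclabel_eqb];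
    try rewrite (Hf eq_refl); try rewrite (Ht eq_refl); lra.
Qed.

Lemma ipS_bulk_energy v J X : (0 < J)%nat ->
  ipS v J (fun j x => fst (elem2 J X j x) * vnorm (dX J X j)) = bulk_energy J X.
Proof.
  intros HJ. destruct v; [exact (ipL_elem_eq_ipE J HJ _ _) | reflexivity].
Qed.

Lemma normal_velocity_test v J (Xm V : nat -> vec) kappa dt :
  ipS v J (fun j x => fst (elem2 J Xm j x)
     * dot (vscal (/ dt) (vsub (elem2 J (fun i => vadd (Xm i) (V i)) j x) (elem2 J Xm j x)))
           (vscal (elem J kappa j x * vnorm (dX J Xm j)) (nu J Xm j)))
  = / dt * ipS v J (fun j x => dot (vscal (fst (elem2 J Xm j x) * elem J kappa j x) (nu J Xm j))
                                   (vscal (vnorm (dX J Xm j)) (elem2 J V j x))).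
Proof.
  apply ipS_scal; [solve_smooth_pieces|].
  intros. cbv [dot vscal vsub vadd elem2 elem fst snd]. ring.
Qed.

Lemma curvature_variance_ge0 v per bc J Xm kappa :
  (0 < J)%nat -> inV0 per bc J Xm -> assumptionA per bc J Xm ->
  let K := ipS v J (fun j x => fst (elem2 J Xm j x) * (elem J kappa j x * vnorm (dX J Xm j))) in
  K / bulk_energy J Xm * K
  <= ipS v J (fun j x => fst (elem2 J Xm j x) * Rabs (elem J kappa j x) ^ 2 * vnorm (dX J Xm j)).
Proof.
  intros HJ HV0 HA K.
  assert (Hw : forall j, (1 <= j <= J)%nat -> forall x, q J (j - 1) <= x <= q J j ->
                 0 <= fst (elem2 J Xm j x) * vnorm (dX J Xm j)).
  { intros. apply Rmult_le_pos; [apply (fst_elem2_ge0 per bc); auto | apply vnorm_ge0]. }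
  pose proof (ipS_weighted_variance_ge0 v J (fun j x => fst (elem2 J Xm j x) * vnorm (dX J Xm j))
     (fun j x => elem J kappa j x) HJ ltac:(solve_smooth_pieces) ltac:(solve_smooth_pieces) Hw)
    as V.
  rewrite ipS_bulk_energy in V by auto.
  replace (ipS v J (fun j x => fst (elem2 J Xm j x) * vnorm (dX J Xm j) * elem J kappa j x))
    with K in V by (apply ipS_ext; intros; ring).
  erewrite ipS_ext; [exact V|]. intros. rewrite pow2_abs. ring.
Qed.

Theorem mainTheorem11
  (v : variant) (per : bool) (bc : bool -> bclabel) (rh : bool -> R) (J : nat)
  (Xm dXm : nat -> vec) (kappa : nat -> R) (dt : R) :
  (forall p, Rabs (rh p) <= 1) ->
  (3 <= J)%nat ->
  inV0 per bc J Xm ->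
  assumptionA per bc J Xm ->
  dt > 0 ->
  inVd per bc J dXm ->
  inWS v per bc J kappa ->
  let Xm1 := fun i => vadd (Xm i) (dXm i) in
  (forall chi : nat -> R, inWS v per bc J chi ->
     ipS v J (fun j x => fst (elem2 J Xm j x)
        * dot (vscal (/ dt) (vsub (elem2 J Xm1 j x) (elem2 J Xm j x)))
              (vscal (elem J chi j x * vnorm (dX J Xm j)) (nu J Xm j)))
     = ipS v J (fun j x => fst (elem2 J Xm j x) * elem J kappa j x
                           * (elem J chi j x * vnorm (dX J Xm j)))
       - ipS v J (fun j x => fst (elem2 J Xm j x) * (elem J kappa j x * vnorm (dX J Xm j)))
         / ipE J (fun j x => fst (elem2 J Xm j x) * vnorm (dX J Xm j))
         * ipS v J (fun j x => fst (elem2 J Xm j x) * (elem J chi j x * vnorm (dX J Xm j)))) ->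
  (forall eta : nat -> vec, inVd per bc J eta ->
     ipS v J (fun j x => dot (vscal (fst (elem2 J Xm j x) * elem J kappa j x) (nu J Xm j))
                             (vscal (vnorm (dX J Xm j)) (elem2 J eta j x)))
     + ipE J (fun j x => fst (elem2 J eta j x) * vnorm (dX J Xm1 j))
     + ipE J (fun j x => dot (vscal (fst (elem2 J Xm j x)) (dX J Xm1 j))
                             (vscal (/ vnorm (dX J Xm j)) (dX J eta j)))
     = Bm per bc rh J Xm Xm1 eta) ->
  let A := ipS v J (fun j x => fst (elem2 J Xm j x) * (Rabs (elem J kappa j x)) ^ 2
                                * vnorm (dX J Xm j)) in
  let K := ipS v J (fun j x => fst (elem2 J Xm j x) * (elem J kappa j x * vnorm (dX J Xm j))) in
  let D := ipE J (fun j x => fst (elem2 J Xm j x) * vnorm (dX J Xm j)) in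
  / (2 * PI) * (energy per bc rh J Xm - energy per bc rh J Xm1) >= dt * (A - Rabs K ^ 2 / D)
  /\ dt * (A - Rabs K ^ 2 / D) >= 0.
Proof.
  intros _ HJ3 HV0 HA Hdt HVd HWk Xm1 Eq1 Eq2 A K D.
  assert (HJ : (0 < J)%nat) by lia.
  specialize (Eq1 kappa HWk). specialize (Eq2 dXm HVd).
  unfold Xm1 in Eq1. rewrite normal_velocity_test in Eq1. fold K D in Eq1.
  replace (ipS v J (fun j x => fst (elem2 J Xm j x) * elem J kappa j x
                               * (elem J kappa j x * vnorm (dX J Xm j))))
    with A in Eq1 by (apply ipS_ext; intros; rewrite pow2_abs; ring).
  pose proof (curvature_variance_ge0 v per bc J Xm kappa HJ HV0 HA) as Hvar.
  cbv zeta in Hvar. fold K A in Hvar. change (bulk_energy J Xm) with D in Hvar.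
  pose proof (bulk_energy_step J Xm dXm HJ (proj1 HA) (fst_elem2_ge0 per bc J Xm HJ HV0 HA))
    as Hbulk.
  pose proof (boundary_energy_step per bc rh J Xm dXm (proj1 (proj2 HVd))) as Hbdry.
  cbv zeta in Hbulk, Hbdry. fold Xm1 in Hbulk, Hbdry.
  replace (Rabs K ^ 2 / D) with (K / D * K) by (rewrite pow2_abs; unfold Rdiv; ring).
  rewrite !energy_split. pose proof PI_RGT_0.
  split; [| apply Rle_ge, Rmult_le_pos; lra].
  replace (/ (2 * PI) * _) with (bulk_energy J Xm - bulk_energy J Xm1
      + (boundary_energy per bc rh J Xm - boundary_energy per bc rh J Xm1)) by (field; lra).
  rewrite <- Eq1, <- Rmult_assoc, Rinv_r, Rmult_1_l by lra.
  lra.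
Qed.
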